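(* Let $\{x_i,v_i\}_{i\in[N]}$ be the global solution of the delayed Cucker–Smale system described in the context, let $\beta>0$ and \[ G(t):=d_v(t)+\beta\int_{\max\{0,t-2\tau\}}^t e^{-(t-s)}\int_s^t\max_{i\in[N]}|\dot v_i(r)|\,\mathrm dr\,\mathrm ds,\qquad t\ge0. \] Then for all $i,j\in[N]$ and $t\ge2\tau$, \[ |x_j(t-\tau)-x_i(t-\sigma)|\le|x_j(\tau)-x_i(2\tau-\sigma)|+\int_{2\tau}^t\Big(G(s-\tau)+\beta^{-1}e^{2\tau}G(s-\sigma)+\int_{s-\tau}^{s-\sigma}G(r-\tau)\,\mathrm dr\Big)\mathrm ds. \]
   Context: Let $N\ge2$, $d\ge1$ be integers, $[N]=\{1,\dots,N\}$, $0\le\sigma\le\tau$. Let $\psi:[0,\infty)\to[0,\infty)$ be continuous, nonincreasing, positive everywhere, with $\sup\psi\le1$. Given $x_i^0\in C^1([-\tau,0],\mathbb{R}^d)$, $v_i^0\in C([-\tau,0],\mathbb{R}^d)$ with $\frac{\mathrm d}{\mathrm dt}x_i^0=v_i^0$, $\{x_i,v_i\}$ is the global solution of $\dot x_i(t)=v_i(t)$, $\dot v_i(t)=\sum_{j\ne i}a_{ij}(t)(v_j(t-\tau)-v_i(t-\sigma))$ for $t>0$, with $a_{ij}(t)=\frac1{N-1}\psi(|x_i(t-\sigma)-x_j(t-\tau)|)$, and $x_i=x_i^0$, $v_i=v_i^0$ on $[-\tau,0]$ ($v_i$ continuously differentiable on $[0,\infty)$). $d_v(t):=\max_{i,j}|v_i(t)-v_j(t)|$.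 *)

From Stdlib Require Export Reals Lra List.
From Coquelicot Require Export Coquelicot.
Open Scope R_scope.

(* Agents are indexed by i in {0,...,N-1} (= [N] shifted), coordinates by
   k in {0,...,d-1}; a vector of R^d is a function nat -> R read on k < d. *)
Definition sumR (l : list nat) (f : nat -> R) : R :=
  fold_right (fun j acc => f j + acc) 0 l.
Definition maxR (l : list nat) (f : nat -> R) : R :=
  fold_right (fun j acc => Rmax (f j) acc) 0 l.

Definition enorm (d : nat) (u : nat -> R) : R :=
  sqrt (sumR (seq 0 d) (fun k => u k ^ 2)).

Definition dv (N d : nat) (v : nat -> R -> nat -> R) (t : R) : R :=
  maxR (seq 0 N) (fun i => maxR (seq 0 N)
    (fun j => enorm d (fun k => v i t k - v j t k))).

Definition vdot_max (N d : nat) (v : nat -> R -> nat -> R) (r : R) : R :=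
  maxR (seq 0 N) (fun i => enorm d (fun k => Derive (fun s => v i s k) r)).

Definition Gfun (N d : nat) (tau beta : R) (v : nat -> R -> nat -> R) (t : R) : R :=
  dv N d v t + beta * RInt (fun s => exp (- (t - s)) *
                              RInt (fun r => vdot_max N d v r) s t)
                           (Rmax 0 (t - 2 * tau)) t.

(* derivative of f at t relative to the set D (one-sided at endpoints) *)
Definition deriv_within (D : R -> Prop) (f : R -> R) (t l : R) : Prop :=
  filterlim (fun h => (f h - f t) / (h - t))
            (within (fun h => D h /\ h <> t) (locally t)) (locally l).

Definition cont_within (D : R -> Prop) (f : R -> R) (t : R) : Prop :=
  filterlim f (within D (locally t)) (locally (f t)).

Definition CS_rhs (N d : nat) (psi : R -> R) (sigma tau : R)
  (x v : nat -> R -> nat -> R) (i : nat) (t : R) (k : nat) : R :=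
  sumR (seq 0 N) (fun j => if Nat.eqb j i then 0 else
     / INR (N - 1) * psi (enorm d (fun m => x i (t - sigma) m - x j (t - tau) m))
       * (v j (t - tau) k - v i (t - sigma) k)).

From Stdlib Require Import Lia Psatz IndefiniteDescription.

(* With [F s = x_j (s - tau) - x_i (s - sigma)] one has
   [|F t| <= |F (2 tau)| + ∫_{2 tau}^t |v_j (s - tau) - v_i (s - sigma)| ds], and passing through
   [v_i (s - tau)] bounds the integrand by [d_v (s - tau)] plus the integral of [max_i |v_i'|]
   over the window [[s - tau, s - sigma]].  Since [psi <= 1], the velocity equation gives
   [max_i |v_i' r| <= d_v (r - tau) + ∫_{r - tau}^{r - sigma} max_i |v_i'|], which turns that
   window integral into [∫ d_v (r - tau) dr] plus a double window integral.  The latter is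
   dominated by the memory term of [G (s - sigma)] up to the factor [exp (2 tau) / beta], since
   that term integrates over a longer window with a weight at least [exp (- 2 tau)].
   Finally [d_v <= G]. *)

(** * Finite sums and maxima *)

Lemma sumR_ext l f g : (forall j, In j l -> f j = g j) -> sumR l f = sumR l g.
Proof. induction l as [|a l IH]; simpl; intros H; auto. rewrite H, IH; auto. Qed.

Lemma sumR_le l f g : (forall j, In j l -> f j <= g j) -> sumR l f <= sumR l g.
Proof. induction l as [|a l IH]; simpl; intros H. lra. apply Rplus_le_compat; auto. Qed.

Lemma sumR_nonneg l f : (forall j, In j l -> 0 <= f j) -> 0 <= sumR l f.
Proof. induction l as [|a l IH]; simpl; intros H. lra. apply Rplus_le_le_0_compat; auto. Qed.

Lemma sumR_plus l f g : sumR l (fun k => f k + g k) = sumR l f + sumR l g.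
Proof. induction l as [|a l IH]; simpl. ring. rewrite IH; ring. Qed.

Lemma sumR_minus l f g : sumR l (fun k => f k - g k) = sumR l f - sumR l g.
Proof. induction l as [|a l IH]; simpl. ring. rewrite IH; ring. Qed.

Lemma sumR_scal l c f : sumR l (fun k => c * f k) = c * sumR l f.
Proof. induction l as [|a l IH]; simpl. ring. rewrite IH; ring. Qed.

Lemma sumR_app l1 l2 f : sumR (l1 ++ l2) f = sumR l1 f + sumR l2 f.
Proof. induction l1 as [|a l1 IH]; simpl. ring. rewrite IH; ring. Qed.

Lemma sumR_seq_skip n i c : (i < n)%nat ->
  sumR (seq 0 n) (fun j => if Nat.eqb j i then 0 else c) = INR (n - 1) * c.
Proof.
  assert (Hgen : forall m, sumR (seq 0 m) (fun j => if Nat.eqb j i then 0 else c) =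
    INR m * c - (if Nat.ltb i m then c else 0)).
  { induction m as [|m IH]; [simpl; ring|].
    rewrite seq_S, sumR_app, IH, S_INR; simpl.
    destruct (Nat.eqb_spec m i), (Nat.ltb_spec i m), (Nat.ltb_spec i (S m)); try lia; ring. }
  intros Hi. rewrite Hgen. destruct (Nat.ltb_spec i n); try lia.
  rewrite minus_INR by lia. simpl; ring.
Qed.

Lemma maxR_ext l f g : (forall j, In j l -> f j = g j) -> maxR l f = maxR l g.
Proof. induction l as [|a l IH]; simpl; intros H; auto. rewrite H, IH; auto. Qed.

Lemma maxR_nonneg l f : 0 <= maxR l f.
Proof. induction l as [|a l IH]; simpl. lra. eapply Rle_trans; [exact IH | apply Rmax_r]. Qed.

Lemma le_maxR l f j : In j l -> f j <= maxR l f.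
Proof.
  induction l as [|a l IH]; simpl; [contradiction|]. intros [<- | Hj].
  - apply Rmax_l.
  - eapply Rle_trans; [exact (IH Hj) | apply Rmax_r].
Qed.

Lemma maxR_lub l f c : 0 <= c -> (forall j, In j l -> f j <= c) -> maxR l f <= c.
Proof. induction l as [|a l IH]; simpl; intros Hc H; auto. apply Rmax_lub; auto. Qed.

(** * The Euclidean norm *)

Lemma enorm_nonneg d u : 0 <= enorm d u.
Proof. apply sqrt_pos. Qed.

Lemma enorm_ext d u w : (forall k, (k < d)%nat -> u k = w k) -> enorm d u = enorm d w.
Proof.
  intros H; unfold enorm; f_equal; apply sumR_ext.
  intros k Hk; apply in_seq in Hk; rewrite H; auto; lia.
Qed.

Lemma enorm_sub_sym d a b : enorm d (fun k => a k - b k) = enorm d (fun k => b k - a k).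
Proof. unfold enorm; f_equal; apply sumR_ext; intros; ring. Qed.

Lemma sumR_sqr_nonneg l (a : nat -> R) : 0 <= sumR l (fun k => a k ^ 2).
Proof. apply sumR_nonneg; intros; nra. Qed.

Lemma enorm_pow2 d a : enorm d a ^ 2 = sumR (seq 0 d) (fun k => a k ^ 2).
Proof. apply pow2_sqrt, sumR_sqr_nonneg. Qed.

Lemma enorm_0 d : enorm d (fun _ => 0) = 0.
Proof.
  unfold enorm. replace (sumR (seq 0 d) (fun _ => 0 ^ 2)) with 0; [apply sqrt_0|].
  induction (seq 0 d) as [|a l IH]; [reflexivity|].
  change (0 = 0 ^ 2 + sumR l (fun _ => 0 ^ 2)). rewrite <- IH; ring.
Qed.

Lemma enorm_scal d c a : enorm d (fun k => c * a k) = Rabs c * enorm d a.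
Proof.
  unfold enorm. rewrite <- (sqrt_pow2 (Rabs c)) by apply Rabs_pos.
  rewrite <- sqrt_mult_alt by apply pow2_ge_0. f_equal.
  rewrite pow2_abs, <- sumR_scal. apply sumR_ext; intros; ring.
Qed.

(* [A λ^2 + 2 S λ + B = Σ (λ a_k + b_k)^2 >= 0] for every [λ], hence [S^2 <= A B]. *)
Lemma sumR_mul_pow2_le l a b :
  sumR l (fun k => a k * b k) ^ 2 <= sumR l (fun k => a k ^ 2) * sumR l (fun k => b k ^ 2).
Proof.
  set (S := sumR l (fun k => a k * b k)).
  set (A := sumR l (fun k => a k ^ 2)).
  set (B := sumR l (fun k => b k ^ 2)).
  assert (Hquad : forall la, 0 <= A * la ^ 2 + 2 * S * la + B).
  { intros la. replace (A * la ^ 2 + 2 * S * la + B)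
      with (sumR l (fun k => la ^ 2 * a k ^ 2 + 2 * la * (a k * b k) + b k ^ 2))
      by (rewrite !sumR_plus, !sumR_scal; unfold A, S, B; ring).
    apply sumR_nonneg; intros k _. pose proof (pow2_ge_0 (la * a k + b k)). nra. }
  assert (HA : 0 <= A) by apply sumR_sqr_nonneg.
  destruct (Rle_lt_or_eq_dec 0 A HA) as [HApos | HA0].
  - specialize (Hquad (- S / A)).
    replace (A * (- S / A) ^ 2 + 2 * S * (- S / A) + B) with (B - S ^ 2 / A) in Hquad
      by (field; lra).
    apply Rmult_le_compat_l with (r := A) in Hquad; [|lra].
    replace (A * (B - S ^ 2 / A)) with (A * B - S ^ 2) in Hquad by (field; lra). lra.
  - rewrite <- HA0. destruct (Req_dec S 0) as [HS | HS].
    + rewrite HS. lra.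
    + specialize (Hquad (- (B + 1) / (2 * S))).
      replace (A * (- (B + 1) / (2 * S)) ^ 2 + 2 * S * (- (B + 1) / (2 * S)) + B) with (-1)
        in Hquad by (rewrite <- HA0; field; lra). lra.
Qed.

Lemma sumR_mul_le_enorm d a b : sumR (seq 0 d) (fun k => a k * b k) <= enorm d a * enorm d b.
Proof.
  unfold enorm. rewrite <- sqrt_mult_alt by apply sumR_sqr_nonneg.
  eapply Rle_trans; [apply Rle_abs|].
  rewrite <- (sqrt_pow2 (Rabs _)) by apply Rabs_pos.
  apply sqrt_le_1_alt. rewrite pow2_abs. apply sumR_mul_pow2_le.
Qed.

Lemma enorm_add_le d a b : enorm d (fun k => a k + b k) <= enorm d a + enorm d b.
Proof.
  pose proof (enorm_nonneg d a); pose proof (enorm_nonneg d b).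
  pose proof (enorm_nonneg d (fun k => a k + b k)).
  assert (enorm d (fun k => a k + b k) ^ 2 <= (enorm d a + enorm d b) ^ 2); [|nra].
  replace ((enorm d a + enorm d b) ^ 2)
    with (enorm d a ^ 2 + 2 * (enorm d a * enorm d b) + enorm d b ^ 2) by ring.
  pose proof (sumR_mul_le_enorm d a b).
  rewrite !enorm_pow2.
  replace (sumR (seq 0 d) (fun k => (a k + b k) ^ 2)) with
    (sumR (seq 0 d) (fun k => a k ^ 2) + 2 * sumR (seq 0 d) (fun k => a k * b k)
     + sumR (seq 0 d) (fun k => b k ^ 2))
    by (rewrite <- sumR_scal, <- !sumR_plus; apply sumR_ext; intros; ring).
  lra.
Qed.

Lemma enorm_sub_le d a b c :
  enorm d (fun k => a k - c k) <= enorm d (fun k => a k - b k) + enorm d (fun k => b k - c k).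
Proof. eapply Rle_trans; [|apply enorm_add_le]. right; apply enorm_ext; intros; ring. Qed.

Lemma enorm_sumR_le d l (u : nat -> nat -> R) :
  enorm d (fun k => sumR l (fun j => u j k)) <= sumR l (fun j => enorm d (u j)).
Proof.
  induction l as [|a l IH]; simpl.
  - rewrite enorm_0; lra.
  - eapply Rle_trans; [apply (enorm_add_le d (u a)) | lra].
Qed.

(** * Continuity on the real line *)

(* Coquelicot's [continuous_plus], [continuous_mult], ... are stated for the abstract [plus],
   [mult] and do not unify with [Rplus], [Rmult] under [apply] or [auto]. *)
Lemma continuous_Rplus (f g : R -> R) x :
  continuous f x -> continuous g x -> continuous (fun t => f t + g t) x.
Proof. apply (continuous_plus f g). Qed.

Lemma continuous_Rmult (f g : R -> R) x :
  continuous f x -> continuous g x -> continuous (fun t => f t * g t) x.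
Proof. apply (continuous_mult f g). Qed.

Lemma continuous_Ropp (f : R -> R) x : continuous f x -> continuous (fun t => - f t) x.
Proof. apply (continuous_opp f). Qed.

Lemma continuous_Rminus (f g : R -> R) x :
  continuous f x -> continuous g x -> continuous (fun t => f t - g t) x.
Proof. intros; apply continuous_Rplus; [|apply continuous_Ropp]; assumption. Qed.

Lemma continuous_Rmax (f g : R -> R) x :
  continuous f x -> continuous g x -> continuous (fun t => Rmax (f t) (g t)) x.
Proof.
  intros Hf Hg.
  apply continuous_ext with (fun t => (f t + g t + Rabs (f t - g t)) * / 2).
  - intros t; unfold Rmax.
    destruct (Rle_dec (f t) (g t)); [rewrite Rabs_left1 | rewrite Rabs_right]; lra.
  - apply continuous_Rmult; [|apply continuous_const].
    apply continuous_Rplus; [apply continuous_Rplus; assumption|].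
    apply continuous_Rabs_comp, continuous_Rminus; assumption.
Qed.

Lemma continuous_shift (g : R -> R) c r :
  continuous g (r - c) -> continuous (fun r => g (r - c)) r.
Proof.
  intros Hg; apply (continuous_comp (fun r => r - c) g); [|exact Hg].
  apply continuous_Rminus; [apply continuous_id | apply continuous_const].
Qed.

Create HintDb cont.
#[local] Hint Resolve continuous_Rplus continuous_Rminus continuous_Rmult continuous_Ropp
  continuous_Rmax continuous_const continuous_id continuous_exp continuous_exp_comp : cont.

Lemma continuous_sumR l (f : nat -> R -> R) x :
  (forall j, In j l -> continuous (f j) x) -> continuous (fun t => sumR l (fun j => f j t)) x.
Proof. induction l as [|a l IH]; simpl; intros H; auto with cont. Qed.

Lemma continuous_maxR l (f : nat -> R -> R) x :
  (forall j, In j l -> continuous (f j) x) -> continuous (fun t => maxR l (fun j => f j t)) x.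
Proof. induction l as [|a l IH]; simpl; intros H; auto with cont. Qed.

Lemma continuous_enorm d (u : R -> nat -> R) x :
  (forall k, (k < d)%nat -> continuous (fun t => u t k) x) -> continuous (fun t => enorm d (u t)) x.
Proof.
  intros H. apply continuous_sqrt_comp, (continuous_sumR _ (fun k t => u t k ^ 2)).
  intros k Hk; apply in_seq in Hk. simpl.
  apply continuous_Rmult; [|apply continuous_Rmult; [|apply continuous_const]]; apply H; lia.
Qed.

Lemma ex_RInt_continuous_R (f : R -> R) a b : (forall s, continuous f s) -> ex_RInt f a b.
Proof. intros H; apply (ex_RInt_continuous (V := R_CompleteNormedModule)); auto. Qed.

Lemma continuous_RInt_bounds (g a b : R -> R) x : (forall s, continuous g s) ->
  continuous a x -> continuous b x -> continuous (fun y => RInt g (a y) (b y)) x.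
Proof.
  intros Hg Ha Hb. apply (continuous_comp_2 a b (fun p q => RInt g p q)); auto.
  apply (continuous_RInt g (a x) (b x) (fun p q => RInt g p q)).
  apply filter_forall; intros z.
  apply (RInt_correct (V := R_CompleteNormedModule)), ex_RInt_continuous_R, Hg.
Qed.
#[local] Hint Resolve continuous_RInt_bounds : cont.

Lemma RInt_le_cont (f g : R -> R) a b : a <= b -> (forall s, continuous f s) ->
  (forall s, continuous g s) -> (forall s, a < s < b -> f s <= g s) -> RInt f a b <= RInt g a b.
Proof. intros; apply RInt_le; auto using ex_RInt_continuous_R. Qed.

Lemma RInt_ge_0_cont (f : R -> R) a b : a <= b -> (forall s, continuous f s) ->
  (forall s, a < s < b -> 0 <= f s) -> 0 <= RInt f a b.
Proof. intros; apply RInt_ge_0; auto using ex_RInt_continuous_R. Qed.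

Lemma RInt_Chasles_cont (f : R -> R) a b c : (forall s, continuous f s) ->
  RInt f a b + RInt f b c = RInt f a c.
Proof. intros Hf; apply (RInt_Chasles f); apply ex_RInt_continuous_R, Hf. Qed.

Lemma RInt_le_RInt_superset (f : R -> R) a b c e : a <= c -> c <= e -> e <= b ->
  (forall s, continuous f s) -> (forall s, a <= s <= b -> 0 <= f s) ->
  RInt f c e <= RInt f a b.
Proof.
  intros Hac Hce Heb Hf Hpos.
  rewrite <- (RInt_Chasles_cont f a c b), <- (RInt_Chasles_cont f c e b) by exact Hf.
  assert (0 <= RInt f a c) by (apply RInt_ge_0_cont; auto; intros s Hs; apply Hpos; lra).
  assert (0 <= RInt f e b) by (apply RInt_ge_0_cont; auto; intros s Hs; apply Hpos; lra).
  lra.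
Qed.

Lemma RInt_shift (f : R -> R) a b c : (forall s, continuous f s) ->
  RInt f (a + c) (b + c) = RInt (fun q => f (q + c)) a b.
Proof.
  intros Hf. transitivity (RInt (fun q => scal 1 (f (1 * q + c))) a b).
  - rewrite (RInt_comp_lin (V := R_CompleteNormedModule)) by apply ex_RInt_continuous_R, Hf.
    f_equal; ring.
  - apply RInt_ext; intros q _. change (1 * f (1 * q + c) = f (q + c)).
    rewrite !Rmult_1_l; reflexivity.
Qed.

(** * One-sided derivatives and extensions *)

Lemma locally_le_of_lt a t : a < t -> locally t (fun u => a <= u).
Proof.
  intros Hat. apply (filter_imp (fun u => a < u)); [intros; lra | exact (open_gt a t Hat)].
Qed.

Lemma is_derive_of_deriv_within D f t l :
  locally t D -> deriv_within D f t l -> is_derive f t l.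
Proof.
  intros [e HD] Hlim. apply is_derive_Reals. intros eps Heps.
  assert (Hl : locally l (fun y => Rabs (y - l) < eps))
    by (exists (mkposreal eps Heps); intros y Hy; exact Hy).
  destruct (Hlim _ Hl) as [delta Hdelta].
  exists (mkposreal _ (Rmin_pos _ _ (cond_pos delta) (cond_pos e))); simpl; intros h Hh0 Hh.
  assert (Hth : Rabs (t + h - t) = Rabs h) by (f_equal; ring).
  specialize (Hdelta (t + h)); replace (t + h - t) with h in Hdelta by ring.
  apply Hdelta; [|split; [apply HD | lra]].
  - change (Rabs (t + h - t) < delta); rewrite Hth.
    eapply Rlt_le_trans; [exact Hh | apply Rmin_l].
  - change (Rabs (t + h - t) < e); rewrite Hth.
    eapply Rlt_le_trans; [exact Hh | apply Rmin_r].
Qed.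

Lemma continuous_clamp a (g : R -> R) s :
  cont_within (fun u => a <= u) g (Rmax a s) -> continuous (fun y => g (Rmax a y)) s.
Proof.
  intros Hg P HP.
  destruct (continuous_Rmax (fun _ => a) (fun y => y) s (continuous_const a s)
              (continuous_id s) _ (Hg P HP)) as [e He].
  exists e; intros y Hy; exact (He y Hy (Rmax_l a y)).
Qed.

Definition extend_left (a : R) (f f' : R -> R) (s : R) : R :=
  if Rle_dec a s then f s else f a + f' a * (s - a).

Lemma extend_left_eq a f f' s : a <= s -> extend_left a f f' s = f s.
Proof. intros Has; unfold extend_left; destruct (Rle_dec a s); [reflexivity | contradiction]. Qed.

Lemma is_derive_extend_left a (f f' : R -> R) :
  (forall t, a <= t -> deriv_within (fun u => a <= u) f t (f' t)) ->
  forall s, is_derive (extend_left a f f') s (f' (Rmax a s)).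
Proof.
  intros Hf s. destruct (Rtotal_order a s) as [Has | [<- | Hsa]].
  - rewrite Rmax_right by lra. apply is_derive_ext_loc with f.
    + apply (filter_imp (fun u => a < u)); [|exact (open_gt a s Has)].
      intros u Hu; symmetry; apply extend_left_eq; lra.
    + apply (is_derive_of_deriv_within (fun u => a <= u)); [apply locally_le_of_lt | apply Hf]; lra.
  - rewrite Rmax_left by lra. apply is_derive_Reals. intros eps Heps.
    assert (Hl : locally (f' a) (fun y => Rabs (y - f' a) < eps))
      by (exists (mkposreal eps Heps); intros y Hy; exact Hy).
    destruct (Hf a (Rle_refl a) _ Hl) as [delta Hdelta].
    exists delta; intros h Hh0 Hh. unfold extend_left.
    destruct (Rle_dec a a) as [_ | Hn]; [|lra]. destruct (Rle_dec a (a + h)) as [Hah | Hah].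
    + specialize (Hdelta (a + h)). replace (a + h - a) with h in Hdelta by ring.
      apply Hdelta; [|split; [exact Hah | lra]].
      change (Rabs (a + h - a) < delta). replace (a + h - a) with h by ring. exact Hh.
    + replace ((f a + f' a * (a + h - a) - f a) / h - f' a) with 0 by (field; exact Hh0).
      rewrite Rabs_R0; exact Heps.
  - rewrite Rmax_left by lra. apply is_derive_ext_loc with (fun y => f a + f' a * (y - a)).
    + apply (filter_imp (fun u => u < a)); [|exact (open_lt a s Hsa)].
      intros u Hu; unfold extend_left; destruct (Rle_dec a u); [lra | reflexivity].
    + auto_derive; [exact I | ring].
Qed.

Lemma is_derive_shift (f : R -> R) c s l :
  is_derive f (s - c) l -> is_derive (fun s => f (s - c)) s l.
Proof.
  intros Hf. replace l with (scal 1 l) by (change (1 * l = l); ring).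
  apply (is_derive_comp f (fun s => s - c)); [exact Hf |].
  auto_derive; [exact I | ring].
Qed.

Lemma is_derive_sumR_scal l (c : nat -> R) (F : nat -> R -> R) (F' : nat -> R) s :
  (forall k, In k l -> is_derive (F k) s (F' k)) ->
  is_derive (fun t => sumR l (fun k => c k * F k t)) s (sumR l (fun k => c k * F' k)).
Proof.
  induction l as [|a l IH]; simpl; intros H.
  - apply (is_derive_const 0).
  - apply (is_derive_plus (fun t => c a * F a t) (fun t => sumR l (fun k => c k * F k t))).
    + apply is_derive_scal, H; left; reflexivity.
    + apply IH; intros; apply H; right; assumption.
Qed.

(* With [Δ = F b - F a], the integral of [Δ · F'] is [|Δ|^2], and Cauchy-Schwarz bounds
   it by [|Δ| ∫ |F'|]. *)
Lemma enorm_sub_le_RInt d (F F' : nat -> R -> R) a b : a <= b ->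
  (forall k s, (k < d)%nat -> is_derive (F k) s (F' k s)) ->
  (forall k s, (k < d)%nat -> continuous (F' k) s) ->
  enorm d (fun k => F k b - F k a) <= RInt (fun s => enorm d (fun k => F' k s)) a b.
Proof.
  intros Hab Hd Hc. set (D k := F k b - F k a).
  assert (HcD : forall s, continuous (fun s => sumR (seq 0 d) (fun k => D k * F' k s)) s).
  { intros s; apply (continuous_sumR _ (fun k s => D k * F' k s)).
    intros k Hk; apply in_seq in Hk.
    apply continuous_Rmult; [apply continuous_const | apply Hc; lia]. }
  assert (Hcn : forall s, continuous (fun s => enorm d (fun k => F' k s)) s)
    by (intros s; apply continuous_enorm; intros; apply Hc; assumption).
  assert (HD2 : RInt (fun s => sumR (seq 0 d) (fun k => D k * F' k s)) a b = enorm d D ^ 2).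
  { apply is_RInt_unique. rewrite enorm_pow2.
    replace (sumR (seq 0 d) (fun k => D k ^ 2)) with
      (minus (sumR (seq 0 d) (fun k => D k * F k b)) (sumR (seq 0 d) (fun k => D k * F k a)))
      by (change minus with Rminus; rewrite <- sumR_minus; apply sumR_ext; intros; unfold D; ring).
    apply (is_RInt_derive (fun t => sumR (seq 0 d) (fun k => D k * F k t))); [|intros; apply HcD].
    intros s _; apply is_derive_sumR_scal; intros k Hk; apply in_seq in Hk; apply Hd; lia. }
  assert (Hle : enorm d D ^ 2 <= enorm d D * RInt (fun s => enorm d (fun k => F' k s)) a b).
  { rewrite <- HD2, <- (RInt_scal (V := R_CompleteNormedModule))
      by apply ex_RInt_continuous_R, Hcn.
    apply RInt_le_cont; auto with cont; intros; apply sumR_mul_le_enorm. }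
  pose proof (enorm_nonneg d D).
  assert (0 <= RInt (fun s => enorm d (fun k => F' k s)) a b)
    by (apply RInt_ge_0_cont; auto; intros; apply enorm_nonneg).
  change (enorm d D <= RInt (fun s => enorm d (fun k => F' k s)) a b). nra.
Qed.

(** * The functional [G] *)

(* [G] with [d_v] and [max_i |v_i'|] abstracted into [D] and [M]:
   [Gfun N d tau beta v] is [Gform tau beta (dv N d v) (vdot_max N d v)]. *)
Definition memory (tau : R) (M : R -> R) (u : R) : R :=
  RInt (fun s => exp (- (u - s)) * RInt M s u) (Rmax 0 (u - 2 * tau)) u.

Definition Gform (tau beta : R) (D M : R -> R) (u : R) : R := D u + beta * memory tau M u.

Lemma Gform_ext tau beta D1 D2 M1 M2 u : 0 <= tau -> 0 <= u -> D1 u = D2 u ->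
  (forall r, 0 < r < u -> M1 r = M2 r) -> Gform tau beta D1 M1 u = Gform tau beta D2 M2 u.
Proof.
  intros Htau Hu HD HM. unfold Gform, memory. rewrite HD. do 2 f_equal.
  assert (Ha : 0 <= Rmax 0 (u - 2 * tau) <= u) by (split; [apply Rmax_l | apply Rmax_lub; lra]).
  set (a := Rmax 0 (u - 2 * tau)) in *.
  apply RInt_ext; intros s Hs. rewrite Rmin_left, Rmax_right in Hs by lra.
  f_equal. apply RInt_ext; intros r Hr. rewrite Rmin_left, Rmax_right in Hr by lra.
  apply HM; lra.
Qed.

Section Gform.

Variables (tau beta : R) (D M : R -> R).
Hypothesis Htau : 0 <= tau.
Hypothesis HM : forall s, continuous M s.
Hypothesis HM0 : forall s, 0 <= M s.

Lemma RInt_M_nonneg a b : a <= b -> 0 <= RInt M a b.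
Proof. intros; apply RInt_ge_0_cont; auto. Qed.

Lemma continuous_memory_kernel u q : continuous (fun s => exp (- (u - s)) * RInt M s u) q.
Proof. auto with cont. Qed.

Lemma memory_nonneg u : 0 <= u -> 0 <= memory tau M u.
Proof.
  intros Hu. apply RInt_ge_0_cont; [apply Rmax_lub; lra | apply continuous_memory_kernel |].
  intros s Hs. apply Rmult_le_pos; [apply Rlt_le, exp_pos | apply RInt_M_nonneg; lra].
Qed.

(* Factoring [exp (- (u - s)) = exp (- u) * exp s] takes [u] out of the integrand. *)
Lemma memory_kernel_factor a u :
  RInt (fun s => exp (- (u - s)) * RInt M s u) a u =
  exp (- u) * (RInt M 0 u * RInt exp a u - RInt (fun s => exp s * RInt M 0 s) a u).
Proof.
  assert (Hpt : forall s, exp (- (u - s)) * RInt M s u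
                         = exp (- u) * (RInt M 0 u * exp s - exp s * RInt M 0 s)).
  { intros s. rewrite <- (RInt_Chasles_cont M 0 s u HM).
    replace (- (u - s)) with (- u + s) by ring. rewrite exp_plus. ring. }
  rewrite (RInt_ext _ _ a u (fun s _ => Hpt s)).
  rewrite (RInt_scal (V := R_CompleteNormedModule)), (RInt_minus (V := R_CompleteNormedModule)),
    (RInt_scal (V := R_CompleteNormedModule)); try apply ex_RInt_continuous_R; auto with cont.
Qed.

Lemma continuous_memory u : continuous (memory tau M) u.
Proof.
  apply (continuous_ext (fun u => exp (- u) * (RInt M 0 u * RInt exp (Rmax 0 (u - 2 * tau)) u
    - RInt (fun s => exp s * RInt M 0 s) (Rmax 0 (u - 2 * tau)) u))).
  - intros w; unfold memory; rewrite memory_kernel_factor; reflexivity.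
  - auto 8 with cont.
Qed.

Lemma continuous_Gform u : (forall s, continuous D s) -> continuous (Gform tau beta D M) u.
Proof. intros HD; unfold Gform; apply continuous_Rplus; auto using continuous_memory with cont. Qed.

Lemma Gform_ge u : 0 <= beta -> 0 <= u -> D u <= Gform tau beta D M u.
Proof. intros Hbeta Hu; unfold Gform; pose proof (memory_nonneg u Hu); nra. Qed.

Lemma memory_le_Gform u : 0 < beta -> 0 <= D u -> memory tau M u <= / beta * Gform tau beta D M u.
Proof.
  intros Hbeta HD. unfold Gform. rewrite Rmult_plus_distr_l, <- Rmult_assoc, Rinv_l by lra.
  pose proof (Rmult_le_pos _ _ (Rlt_le _ _ (Rinv_0_lt_compat _ Hbeta)) HD). lra.
Qed.

(* After the shift [r = q + tau], the inner window [[q, q + tau - sigma]] lies in [[q, s - sigma]],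
   and [exp (- (s - sigma - q)) >= exp (- 2 tau)] for [q >= s - 2 tau]. *)
Lemma RInt_window_window_le_memory sigma s : 0 <= sigma <= tau -> 2 * tau <= s ->
  RInt (fun r => RInt M (r - tau) (r - sigma)) (s - tau) (s - sigma)
  <= exp (2 * tau) * memory tau M (s - sigma).
Proof.
  intros Hsigma Hs. set (u := s - sigma).
  set (K q := exp (- (u - q)) * RInt M q u).
  assert (HK : forall q, continuous (fun q => exp (2 * tau) * K q) q)
    by (intros; apply continuous_Rmult; [apply continuous_const | apply continuous_memory_kernel]).
  assert (HK0 : forall q, q <= u -> 0 <= exp (2 * tau) * K q).
  { intros q Hq. apply Rmult_le_pos; [apply Rlt_le, exp_pos|].
    apply Rmult_le_pos; [apply Rlt_le, exp_pos | apply RInt_M_nonneg; lra]. }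
  assert (Hwin : forall r, continuous (fun r => RInt M (r - tau) (r - sigma)) r) by auto with cont.
  assert (Hshift : RInt (fun r => RInt M (r - tau) (r - sigma)) (s - tau) u
                   = RInt (fun q => RInt M q (q + tau - sigma)) (s - 2 * tau) (u - tau)).
  { transitivity (RInt (fun r => RInt M (r - tau) (r - sigma)) (s - 2 * tau + tau) (u - tau + tau)).
    - f_equal; ring.
    - rewrite RInt_shift by exact Hwin. apply RInt_ext; intros q _. f_equal; ring. }
  assert (Hpt : forall q, s - 2 * tau < q < u - tau ->
                RInt M q (q + tau - sigma) <= exp (2 * tau) * K q).
  { intros q Hq. unfold K.
    assert (Hwide : RInt M q (q + tau - sigma) <= RInt M q u)
      by (apply RInt_le_RInt_superset; auto; lra).
    assert (Hexp : 1 <= exp (2 * tau) * exp (- (u - q))).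
    { rewrite <- exp_plus. pose proof (exp_ineq1_le (2 * tau + - (u - q))). unfold u in *; lra. }
    pose proof (RInt_M_nonneg q u ltac:(lra)). nra. }
  assert (Ha : Rmax 0 (u - 2 * tau) <= s - 2 * tau) by (apply Rmax_lub; unfold u; lra).
  change (RInt (fun r => RInt M (r - tau) (r - sigma)) (s - tau) u
          <= exp (2 * tau) * memory tau M u).
  rewrite Hshift. unfold memory.
  rewrite <- (RInt_scal (V := R_CompleteNormedModule))
    by apply ex_RInt_continuous_R, continuous_memory_kernel.
  apply Rle_trans with (RInt (fun q => exp (2 * tau) * K q) (s - 2 * tau) (u - tau)).
  - apply RInt_le_cont; [unfold u; lra | | apply HK | exact Hpt].
    intros q; apply continuous_RInt_bounds; auto with cont.
  - apply RInt_le_RInt_superset; [exact Ha | unfold u; lra | lra | apply HK |].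
    intros q Hq; apply HK0; lra.
Qed.

End Gform.

(** * The delayed Cucker-Smale system *)

Lemma enorm_CS_rhs_le N d psi sigma tau x v i r B : (2 <= N)%nat -> (i < N)%nat ->
  (forall q, 0 <= q -> 0 <= psi q <= 1) ->
  (forall j, (j < N)%nat -> enorm d (fun k => v j (r - tau) k - v i (r - sigma) k) <= B) ->
  enorm d (fun k => CS_rhs N d psi sigma tau x v i r k) <= B.
Proof.
  intros HN Hi Hpsi HB. unfold CS_rhs.
  assert (HN1 : 0 < INR (N - 1)) by (apply lt_0_INR; lia).
  eapply Rle_trans; [apply (enorm_sumR_le d (seq 0 N) (fun j k => if Nat.eqb j i then 0 else
     / INR (N - 1) * psi (enorm d (fun m => x i (r - sigma) m - x j (r - tau) m))
       * (v j (r - tau) k - v i (r - sigma) k)))|].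
  apply Rle_trans with (sumR (seq 0 N) (fun j => if Nat.eqb j i then 0 else / INR (N - 1) * B)).
  - apply sumR_le; intros j Hj; apply in_seq in Hj. destruct (Nat.eqb j i).
    + rewrite enorm_0; lra.
    + rewrite enorm_scal, Rabs_right.
      * destruct (Hpsi (enorm d (fun m => x i (r - sigma) m - x j (r - tau) m))) as [Hp0 Hp1];
          [apply enorm_nonneg|].
        pose proof (HB j ltac:(lia)).
        pose proof (enorm_nonneg d (fun k => v j (r - tau) k - v i (r - sigma) k)).
        rewrite Rmult_assoc. apply Rmult_le_compat_l; [apply Rlt_le, Rinv_0_lt_compat, HN1 | nra].
      * apply Rle_ge, Rmult_le_pos;
          [apply Rlt_le, Rinv_0_lt_compat, HN1 | apply Hpsi, enorm_nonneg].
  - rewrite sumR_seq_skip by exact Hi. right; field; lra.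
Qed.

Section DelayedCuckerSmale.

Variables (N d : nat) (sigma tau beta : R) (psi : R -> R) (x v : nat -> R -> nat -> R)
  (W : nat -> nat -> R -> R).

Hypothesis HN : (2 <= N)%nat.
Hypothesis Hsigma : 0 <= sigma.
Hypothesis Hsigma_tau : sigma <= tau.
Hypothesis Hbeta : 0 < beta.
Hypothesis Hpsi : forall r, 0 <= r -> 0 <= psi r <= 1.
Hypothesis Hx : forall i k t, (i < N)%nat -> (k < d)%nat -> - tau <= t ->
  deriv_within (fun u => - tau <= u) (fun s => x i s k) t (v i t k).
Hypothesis Hv : forall i k t, (i < N)%nat -> (k < d)%nat -> - tau <= t ->
  cont_within (fun u => - tau <= u) (fun s => v i s k) t.
Hypothesis Hode : forall i k t, (i < N)%nat -> (k < d)%nat -> 0 < t ->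
  is_derive (fun s => v i s k) t (CS_rhs N d psi sigma tau x v i t k).
Hypothesis HW : forall i k t, (i < N)%nat -> (k < d)%nat -> 0 <= t ->
  deriv_within (fun u => 0 <= u) (fun s => v i s k) t (W i k t) /\
  cont_within (fun u => 0 <= u) (W i k) t.

(* [W] is the one-sided derivative of [v] on [[0, +oo)]; [vc] and [Mdot] are the continuous
   extensions to all of [R] of [v] and of [vdot_max], frozen before [-tau] and [0]. *)
Let vc i s k := v i (Rmax (- tau) s) k.
Let Mdot r := maxR (seq 0 N) (fun i => enorm d (fun k => W i k (Rmax 0 r))).
Let Dv := dv N d vc.
Let G := Gform tau beta Dv Mdot.

Lemma vc_eq i s k : - tau <= s -> vc i s k = v i s k.
Proof. intros; unfold vc; rewrite Rmax_right; auto. Qed.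

Lemma continuous_vc i k s : (i < N)%nat -> (k < d)%nat -> continuous (fun s => vc i s k) s.
Proof. intros; apply (continuous_clamp (- tau) (fun s => v i s k)), Hv; auto; apply Rmax_l. Qed.

Lemma continuous_W_clamp i k s : (i < N)%nat -> (k < d)%nat ->
  continuous (fun s => W i k (Rmax 0 s)) s.
Proof. intros; apply continuous_clamp, HW; auto; apply Rmax_l. Qed.

Lemma W_is_derive i k r : (i < N)%nat -> (k < d)%nat -> 0 < r ->
  is_derive (fun s => v i s k) r (W i k r).
Proof.
  intros; apply (is_derive_of_deriv_within (fun u => 0 <= u));
    [apply locally_le_of_lt | apply HW]; auto; lra.
Qed.

Lemma W_eq_CS_rhs i k r : (i < N)%nat -> (k < d)%nat -> 0 < r ->
  W i k r = CS_rhs N d psi sigma tau x v i r k.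
Proof.
  intros Hi Hk Hr. rewrite <- (is_derive_unique _ _ _ (W_is_derive i k r Hi Hk Hr)).
  apply is_derive_unique, Hode; assumption.
Qed.

Lemma continuous_Mdot r : continuous Mdot r.
Proof.
  apply (continuous_maxR _ (fun i r => enorm d (fun k => W i k (Rmax 0 r)))).
  intros i Hi; apply in_seq in Hi. apply continuous_enorm; intros k Hk.
  apply continuous_W_clamp; lia.
Qed.

Lemma Mdot_nonneg r : 0 <= Mdot r.
Proof. apply maxR_nonneg. Qed.

Lemma continuous_Dv u : continuous Dv u.
Proof.
  apply (continuous_maxR _
    (fun a u => maxR (seq 0 N) (fun b => enorm d (fun k => vc a u k - vc b u k)))).
  intros a Ha; apply in_seq in Ha.
  apply (continuous_maxR _ (fun b u => enorm d (fun k => vc a u k - vc b u k))).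
  intros b Hb; apply in_seq in Hb.
  apply continuous_enorm; intros k Hk. apply continuous_Rminus; apply continuous_vc; lia.
Qed.

Lemma Dv_nonneg u : 0 <= Dv u.
Proof. apply maxR_nonneg. Qed.

Lemma enorm_vc_sub_le_Dv i j u : (i < N)%nat -> (j < N)%nat ->
  enorm d (fun k => vc i u k - vc j u k) <= Dv u.
Proof.
  intros Hi Hj. eapply Rle_trans; [| apply (le_maxR _ _ i); apply in_seq; lia].
  apply (le_maxR _ (fun j => enorm d (fun k => vc i u k - vc j u k))); apply in_seq; lia.
Qed.

Lemma velocity_increment_le i p u : (i < N)%nat -> 0 <= p <= u ->
  enorm d (fun k => v i p k - v i u k) <= RInt Mdot p u.
Proof.
  intros Hi Hpu. set (V k := extend_left 0 (fun s => v i s k) (W i k)).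
  rewrite enorm_sub_sym, (enorm_ext d _ (fun k => V k u - V k p))
    by (intros; unfold V; rewrite !extend_left_eq; lra).
  eapply Rle_trans; [apply (enorm_sub_le_RInt d V (fun k s => W i k (Rmax 0 s))); [lra | |]|].
  - intros k s Hk; apply is_derive_extend_left; intros; apply HW; auto.
  - intros k s Hk; apply continuous_W_clamp; auto.
  - apply RInt_le_cont; [lra | | apply continuous_Mdot |].
    + intros s; apply continuous_enorm; intros; apply continuous_W_clamp; auto.
    + intros s _. apply (le_maxR _ (fun i => enorm d (fun k => W i k (Rmax 0 s)))).
      apply in_seq; lia.
Qed.

Lemma Mdot_le r : tau <= r -> 0 < r ->
  Mdot r <= Dv (r - tau) + RInt Mdot (r - tau) (r - sigma).
Proof.
  intros Htr Hr. apply maxR_lub.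
  { pose proof (Dv_nonneg (r - tau)).
    pose proof (RInt_M_nonneg Mdot continuous_Mdot Mdot_nonneg (r - tau) (r - sigma)). lra. }
  intros i Hi; apply in_seq in Hi.
  rewrite (enorm_ext d _ (fun k => CS_rhs N d psi sigma tau x v i r k))
    by (intros; rewrite Rmax_right by lra; apply W_eq_CS_rhs; auto; lia).
  apply enorm_CS_rhs_le; auto; [lia|]. intros j Hj.
  eapply Rle_trans; [apply (enorm_sub_le d _ (fun k => v i (r - tau) k)) | apply Rplus_le_compat].
  - rewrite (enorm_ext d _ (fun k => vc j (r - tau) k - vc i (r - tau) k))
      by (intros; rewrite !vc_eq; lra).
    apply enorm_vc_sub_le_Dv; lia.
  - apply velocity_increment_le; [lia | lra].
Qed.

Lemma Gfun_eq_G u : 0 <= u -> Gfun N d tau beta v u = G u.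
Proof.
  intros Hu. change (Gform tau beta (dv N d v) (vdot_max N d v) u = G u).
  apply Gform_ext; [lra | exact Hu | |].
  - apply maxR_ext; intros a _; apply maxR_ext; intros b _.
    apply enorm_ext; intros; rewrite !vc_eq; lra.
  - intros r Hr. apply maxR_ext; intros i Hi; apply in_seq in Hi.
    apply enorm_ext; intros k Hk. rewrite Rmax_right by lra.
    apply is_derive_unique, W_is_derive; [lia | exact Hk | lra].
Qed.

Lemma continuous_G_shift c r : continuous (fun r => G (r - c)) r.
Proof.
  apply continuous_shift, continuous_Gform; auto using continuous_Mdot, continuous_Dv; lra.
Qed.

Let Gbound s := G (s - tau) + / beta * exp (2 * tau) * G (s - sigma)
                + RInt (fun r => G (r - tau)) (s - tau) (s - sigma).

Lemma continuous_Gbound s : continuous Gbound s.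
Proof.
  apply continuous_Rplus; [apply continuous_Rplus|].
  - apply continuous_G_shift.
  - apply continuous_Rmult; [apply continuous_const | apply continuous_G_shift].
  - apply continuous_RInt_bounds; auto using continuous_G_shift with cont.
Qed.

Lemma relative_velocity_le i j s : (i < N)%nat -> (j < N)%nat -> 2 * tau < s ->
  enorm d (fun k => vc j (s - tau) k - vc i (s - sigma) k) <= Gbound s.
Proof.
  intros Hi Hj Hs.
  assert (Hwin : forall r, continuous (fun r => RInt Mdot (r - tau) (r - sigma)) r)
    by (intros; apply continuous_RInt_bounds; auto using continuous_Mdot with cont).
  assert (HDv : forall r, continuous (fun r => Dv (r - tau)) r)
    by (intros; apply continuous_shift, continuous_Dv).
  assert (Hincr : enorm d (fun k => vc i (s - tau) k - vc i (s - sigma) k)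
                  <= RInt Mdot (s - tau) (s - sigma)).
  { rewrite (enorm_ext d _ (fun k => v i (s - tau) k - v i (s - sigma) k))
      by (intros; rewrite !vc_eq; lra).
    apply velocity_increment_le; [exact Hi | lra]. }
  assert (Hdouble : RInt Mdot (s - tau) (s - sigma)
    <= RInt (fun r => Dv (r - tau)) (s - tau) (s - sigma)
       + RInt (fun r => RInt Mdot (r - tau) (r - sigma)) (s - tau) (s - sigma)).
  { rewrite <- (RInt_plus (V := R_CompleteNormedModule)) by (apply ex_RInt_continuous_R; auto).
    apply RInt_le_cont; [lra | apply continuous_Mdot | auto with cont |].
    intros r Hr; apply Mdot_le; lra. }
  assert (HDvG : RInt (fun r => Dv (r - tau)) (s - tau) (s - sigma)
                 <= RInt (fun r => G (r - tau)) (s - tau) (s - sigma)).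
  { apply RInt_le_cont; [lra | exact HDv | apply continuous_G_shift |].
    intros r Hr; apply Gform_ge; auto using continuous_Mdot, Mdot_nonneg; lra. }
  assert (Hmem : RInt (fun r => RInt Mdot (r - tau) (r - sigma)) (s - tau) (s - sigma)
                 <= / beta * exp (2 * tau) * G (s - sigma)).
  { eapply Rle_trans;
      [apply RInt_window_window_le_memory; auto using continuous_Mdot, Mdot_nonneg; lra|].
    rewrite (Rmult_comm (/ beta)), Rmult_assoc. apply Rmult_le_compat_l; [apply Rlt_le, exp_pos|].
    apply memory_le_Gform; [exact Hbeta | apply Dv_nonneg]. }
  assert (HDvs : Dv (s - tau) <= G (s - tau))
    by (apply Gform_ge; auto using continuous_Mdot, Mdot_nonneg; lra).
  pose proof (enorm_vc_sub_le_Dv j i (s - tau) Hj Hi).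
  pose proof (enorm_sub_le d (fun k => vc j (s - tau) k) (fun k => vc i (s - tau) k)
                (fun k => vc i (s - sigma) k)).
  unfold Gbound; lra.
Qed.

Lemma position_gap_le_RInt i j t : (i < N)%nat -> (j < N)%nat -> 2 * tau <= t ->
  enorm d (fun k => x j (t - tau) k - x i (t - sigma) k)
  <= enorm d (fun k => x j tau k - x i (2 * tau - sigma) k)
     + RInt (fun s => enorm d (fun k => vc j (s - tau) k - vc i (s - sigma) k)) (2 * tau) t.
Proof.
  intros Hi Hj Ht.
  set (X i k := extend_left (- tau) (fun s => x i s k) (fun s => v i s k)).
  set (F k s := X j k (s - tau) - X i k (s - sigma)).
  assert (HX : forall i k s, - tau <= s -> X i k s = x i s k)
    by (intros; unfold X; apply extend_left_eq; assumption).
  rewrite (enorm_ext d _ (fun k => F k (2 * tau) + (F k t - F k (2 * tau))))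
    by (intros; unfold F; rewrite !HX by lra; ring).
  eapply Rle_trans; [apply enorm_add_le | apply Rplus_le_compat].
  - right; apply enorm_ext; intros k _; unfold F.
    rewrite !HX by lra. replace (2 * tau - tau) with tau by ring. reflexivity.
  - apply (enorm_sub_le_RInt d F (fun k s => vc j (s - tau) k - vc i (s - sigma) k)); [lra | |].
    + intros k s Hk.
      apply (is_derive_minus (fun s => X j k (s - tau)) (fun s => X i k (s - sigma)));
        apply is_derive_shift, is_derive_extend_left; intros; apply Hx; auto.
    + intros k s Hk. apply continuous_Rminus; apply (continuous_shift (fun s => vc _ s k));
        apply continuous_vc; auto.
Qed.

Lemma position_gap_le i j t : (i < N)%nat -> (j < N)%nat -> 2 * tau <= t ->
  enorm d (fun k => x j (t - tau) k - x i (t - sigma) k)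
  <= enorm d (fun k => x j tau k - x i (2 * tau - sigma) k)
     + RInt (fun s => Gfun N d tau beta v (s - tau)
                      + / beta * exp (2 * tau) * Gfun N d tau beta v (s - sigma)
                      + RInt (fun r => Gfun N d tau beta v (r - tau)) (s - tau) (s - sigma))
            (2 * tau) t.
Proof.
  intros Hi Hj Ht.
  eapply Rle_trans; [apply position_gap_le_RInt; assumption | apply Rplus_le_compat_l].
  apply Rle_trans with (RInt Gbound (2 * tau) t).
  - apply RInt_le_cont; [exact Ht | | exact continuous_Gbound |].
    + intros s; apply continuous_enorm; intros k Hk.
      apply continuous_Rminus; apply (continuous_shift (fun s => vc _ s k));
        apply continuous_vc; auto.
    + intros s Hs; apply relative_velocity_le; auto; lra.
  - right; apply RInt_ext; intros s Hs. rewrite Rmin_left, Rmax_right in Hs by lra.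
    unfold Gbound; rewrite !Gfun_eq_G by lra. f_equal.
    apply RInt_ext; intros r Hr. rewrite Rmin_left, Rmax_right in Hr by lra.
    symmetry; apply Gfun_eq_G; lra.
Qed.

End DelayedCuckerSmale.

Theorem lemma4p4 (N d : nat) (sigma tau beta : R) (psi : R -> R)
  (x v : nat -> R -> nat -> R) :
  (2 <= N)%nat -> (1 <= d)%nat -> 0 <= sigma -> sigma <= tau ->
  (* psi : [0,oo) -> [0,oo) continuous, nonincreasing, positive, sup psi <= 1 *)
  (forall r, 0 <= r -> cont_within (fun u => 0 <= u) psi r) ->
  (forall r1 r2, 0 <= r1 -> r1 <= r2 -> psi r2 <= psi r1) ->
  (forall r, 0 <= r -> 0 < psi r <= 1) ->
  (* x_i is C^1 on [-tau,oo) with x_i' = v_i (initial data on [-tau,0], ODE for t>0) *)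
  (forall i k t, (i < N)%nat -> (k < d)%nat -> - tau <= t ->
     deriv_within (fun u => - tau <= u) (fun s => x i s k) t (v i t k)) ->
  (* v_i continuous on [-tau,oo) *)
  (forall i k t, (i < N)%nat -> (k < d)%nat -> - tau <= t ->
     cont_within (fun u => - tau <= u) (fun s => v i s k) t) ->
  (* velocity equation for t > 0 *)
  (forall i k t, (i < N)%nat -> (k < d)%nat -> 0 < t ->
     is_derive (fun s => v i s k) t (CS_rhs N d psi sigma tau x v i t k)) ->
  (* v_i continuously differentiable on [0,oo) *)
  (forall i k, (i < N)%nat -> (k < d)%nat ->
     exists w : R -> R, forall t, 0 <= t ->
       deriv_within (fun u => 0 <= u) (fun s => v i s k) t (w t) /\
       cont_within (fun u => 0 <= u) w t) ->
  0 < beta ->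
  forall i j t, (i < N)%nat -> (j < N)%nat -> 2 * tau <= t ->
    enorm d (fun k => x j (t - tau) k - x i (t - sigma) k)
    <= enorm d (fun k => x j tau k - x i (2 * tau - sigma) k)
       + RInt (fun s => Gfun N d tau beta v (s - tau)
                        + / beta * exp (2 * tau) * Gfun N d tau beta v (s - sigma)
                        + RInt (fun r => Gfun N d tau beta v (r - tau)) (s - tau) (s - sigma))
              (2 * tau) t.
Proof.
  intros HN _ Hsigma Hsigma_tau _ _ Hpsi Hx Hv Hode HC1 Hbeta.
  destruct (functional_choice (fun (ik : nat * nat) (w : R -> R) =>
      (fst ik < N)%nat -> (snd ik < d)%nat -> forall t, 0 <= t ->
      deriv_within (fun u => 0 <= u) (fun s => v (fst ik) s (snd ik)) t (w t) /\
      cont_within (fun u => 0 <= u) w t)) as [W HW].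
  { intros [i k]; simpl.
    destruct (Compare_dec.lt_dec i N), (Compare_dec.lt_dec k d);
      try (exists (fun _ => 0); intros; lia).
    destruct (HC1 i k) as [w Hw]; auto. exists w; auto. }
  apply (position_gap_le N d sigma tau beta psi x v (fun i k => W (i, k))); auto.
  - intros r Hr; specialize (Hpsi r Hr); lra.
  - intros i k t Hi Hk Ht; apply (HW (i, k)); auto.
Qed.
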